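(* Let $G$ be a finite connected graph in which every half-edge is labeled with exactly one label from $\{\mathsf{U},\mathsf{D},\mathsf{L},\mathsf{R}\}$ such that every node satisfies the following constraints: (a) any two edges incident to a node $u$ have different labels at $u$; (b) for every edge $e=\{u,v\}$, $L_u(e)=\mathsf{L}$ iff $L_v(e)=\mathsf{R}$; (c) for every edge $e=\{u,v\}$, $L_u(e)=\mathsf{U}$ iff $L_v(e)=\mathsf{D}$; (d) if $u$ has incident half-edges labeled $\mathsf{R}$ and $\mathsf{U}$, then $f_u(\mathsf{R},\mathsf{U},\mathsf{L},\mathsf{D})=u$; (e) if $f_u(\mathsf{R})$ exists, then $u$ has an incident half-edge labeled $\mathsf{D}$ (resp. $\mathsf{U}$) iff $f_u(\mathsf{R})$ has one; (f) if $f_u(\mathsf{U})$ exists, then $u$ has an incident half-edge labeled $\mathsf{L}$ (resp. $\mathsf{R}$) iff $f_u(\mathsf{U})$ has one. Assume moreover that some node has no incident half-edge labeled $\mathsf{D}$ (or some node has none labeled $\mathsf{U}$), and that some node has no incident half-edge labeled $\mathsf{L}$ (or some node has none labeled $\mathsf{R}$). Then $G$ is a grid structure.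
   Context: $L_u(e)$ denotes the label of half-edge $(u,e)$. For a node $u$ and labels $L_1,\dots,L_k$, $f_u(L_1,\dots,L_k)$ is the endpoint $v_{k+1}$ of the path $u=v_1,v_2,\dots,v_{k+1}$ where $v_{i+1}$ is reached from $v_i$ via the edge $e_i$ with $L_{v_i}(e_i)=L_i$, if this path exists and is unique; otherwise $f_u(L_1,\dots,L_k)=\bot$ (''exists'' means $\neq\bot$). A graph is a grid structure of size $h\times w$ if its nodes can be assigned (distinct) coordinates $(x_u,y_u)$ with $0\le x_u<w$, $0\le y_u<h$ such that for nodes $u,v$ with $x_v\le x_u$, $y_v\le y_u$ there is an edge $\{u,v\}$ iff $(x_u,y_u)=(x_v+1,y_v)$ or $(x_u,y_u)=(x_v,y_v+1)$. *)

From mathcomp Require Import all_boot.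
Set Implicit Arguments. Unset Strict Implicit. Unset Printing Implicit Defensive.

Inductive label := lU | lD | lL | lR.

Section Labeled.
Variables (V : finType) (adj : rel V) (lab : V -> V -> label).
(* adj : simple graph (symmetric, irreflexive); lab u v = label of the
   half-edge (u, {u,v}) at u, meaningful when adj u v. *)

Definition step (l : label) (u v : V) : Prop := adj u v /\ lab u v = l.

(* lpath u ls p : p = [v2; ...; v_{k+1}] is a path from u = v1 following
   labels ls = [L1; ...; Lk] *)
Fixpoint lpath (u : V) (ls : seq label) (p : seq V) : Prop :=
  match ls, p with
  | [::], [::] => True
  | l :: ls', w :: p' => step l u w /\ lpath w ls' p'
  | _, _ => False
  end.

(* f_u(ls) = v : the path exists, is unique, and ends at v *)
Definition f_eq (u : V) (ls : seq label) (v : V) : Prop :=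
  exists p, [/\ lpath u ls p, last u p = v & forall q, lpath u ls q -> q = p].

Definition has_label (u : V) (l : label) : Prop := exists v, step l u v.

Definition valid_labeling : Prop :=
  (forall u v w, adj u v -> adj u w -> v != w -> lab u v <> lab u w) /\
  (forall u v, adj u v -> (lab u v = lL <-> lab v u = lR)) /\
  (forall u v, adj u v -> (lab u v = lU <-> lab v u = lD)) /\
  (forall u, has_label u lR -> has_label u lU ->
     f_eq u [:: lR; lU; lL; lD] u) /\
  (forall u v, f_eq u [:: lR] v ->
     (has_label u lD <-> has_label v lD) /\
     (has_label u lU <-> has_label v lU)) /\
  (forall u v, f_eq u [:: lU] v ->
     (has_label u lL <-> has_label v lL) /\
     (has_label u lR <-> has_label v lR)).

End Labeled.

Definition grid_structure_of_size (V : finType) (adj : rel V) (h w : nat) : Prop :=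
  exists (x y : V -> nat),
    [/\ forall u v, x u = x v -> y u = y v -> u = v,
        forall u, x u < w /\ y u < h
      & forall u v, x v <= x u -> y v <= y u ->
          (adj u v <-> ((x u = (x v).+1 /\ y u = y v) \/
                        (x u = x v /\ y u = (y v).+1)))].

Definition grid_structure (V : finType) (adj : rel V) : Prop :=
  exists h w, grid_structure_of_size adj h w.

From HB Require Import structures.
From mathcomp Require Import all_boot.
From Stdlib Require Import Classical.
Set Implicit Arguments. Unset Strict Implicit. Unset Printing Implicit Defensive.

(* Let x u be the number of L-steps from u until a node without an L-edge
   is reached, and y u the number of D-steps.  Both are finite: an
   infinite L-ray would, by the commuting squares of (d) and the invariance of
   (e) and (f), spread to every node, making "go left" a permutation of the
   finite node set, which contradicts the node missing an L- or an R-edge.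
   An L-step lowers x by one and keeps y, a D-step the other way round.
   Going left to the end and then down to the end is constant along edges,
   hence constant, so exactly one node sits at (0, 0); since L- and D-steps
   are injective, (x, y) is injective, and the edges are those of the grid. *)

Definition nat_of_label (l : label) : nat :=
  match l with lU => 0 | lD => 1 | lL => 2 | lR => 3 end.

Definition label_of_nat (n : nat) : label :=
  match n with 0 => lU | 1 => lD | 2 => lL | _ => lR end.

Lemma nat_of_labelK : cancel nat_of_label label_of_nat. Proof. by case. Qed.

HB.instance Definition _ := Equality.copy label (can_type nat_of_labelK).

Definition has_succ (V : finType) (r : rel V) (u : V) : bool := [exists v, r u v].

Lemma connect_preserved (V : finType) (e : rel V) (P : V -> Prop) :
  (forall u v, e u v -> P u -> P v) -> forall u v, connect e u v -> P u -> P v.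
Proof.
move=> eP u v /connectP [p + ->]; elim: p u => [//|w p IHp] u /= /andP [euw pw] Pu.
exact: IHp pw (eP u w euw Pu).
Qed.

Section Coordinate.
Variables (V : finType) (adj a b : rel V).

(* [c u] counts the [a]-steps from [u] to the end [e u] of its [a]-ray. *)
Record coordinate_along (c : V -> nat) (e : V -> V) : Prop := CoordinateAlong {
  coord_eq0 : forall u, (c u == 0) = ~~ has_succ a u;
  coord_succ : forall u v, a u v -> c u = (c v).+1;
  coord_transverse : forall u v, b u v -> c u = c v;
  end_succ : forall u v, a u v -> e u = e v;
  end_transverse : forall u v, b u v -> b (e u) (e v);
  end_id : forall u, ~~ has_succ a u -> e u = u }.

Lemma coord_gt0_succ c e : coordinate_along c e -> forall u, 0 < c u -> exists v, a u v.
Proof. by move=> cc u; rewrite lt0n (coord_eq0 cc) negbK => /existsP. Qed.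

Hypothesis a_functional : forall u v w, a u v -> a u w -> v = w.
Hypothesis a_injective : forall u v w, a u w -> a v w -> u = v.
Hypothesis ab_square : forall u v w, a u v -> b u w -> exists2 z, a w z & b v z.
Hypothesis b_has_succ : forall u v, b u v -> has_succ a u = has_succ a v.
Hypothesis connected : forall u v, connect adj u v.
Hypothesis adj_ab : forall u v, adj u v -> [\/ a u v, a v u, b u v | b v u].
Hypothesis a_has_end : (exists u, ~~ has_succ a u) \/ (exists v, ~~ [exists u, a u v]).

Let anext u := odflt u [pick v | a u v].

Lemma anextE u v : a u v -> anext u = v.
Proof.
move=> auv; rewrite /anext; case: pickP => [w auw | /(_ v)] /=.
  exact: a_functional auw auv.
by rewrite auv.
Qed.

Lemma anext_id u : ~~ has_succ a u -> anext u = u.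
Proof.
move/existsPn=> no_succ; rewrite /anext; case: pickP => // w auw.
by rewrite (negbTE (no_succ w)) in auw.
Qed.

Lemma a_anext u : has_succ a u -> a u (anext u).
Proof. by case/existsP=> v auv; rewrite (anextE auv). Qed.

Lemma iter_anextS u v n : a u v -> iter n.+1 anext u = iter n anext v.
Proof. by move=> auv; rewrite iterSr (anextE auv). Qed.

Lemma b_iter_anext u v n : b u v -> b (iter n anext u) (iter n anext v).
Proof.
move=> buv; elim: n => [//|n IHn] /=.
have [succ_u | no_succ_u] := boolP (has_succ a (iter n anext u)).
  by have [z az bz] := ab_square (a_anext succ_u) IHn; rewrite (anextE az).
have no_succ_v : ~~ has_succ a (iter n anext v) by rewrite -(b_has_succ IHn).
by rewrite !anext_id.
Qed.

Lemma has_succ_iter_anext u v n :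
  b u v -> has_succ a (iter n anext u) = has_succ a (iter n anext v).
Proof. by move=> buv; apply/b_has_succ/b_iter_anext. Qed.

Definition a_ray u := forall n, has_succ a (iter n anext u).

Lemma a_ray_adj u v : adj u v -> a_ray u -> a_ray v.
Proof.
move=> /adj_ab [auv | avu | buv | bvu] ray_u n.
- by rewrite -(iter_anextS n auv).
- by case: n => [|n]; [apply/existsP; exists u | rewrite (iter_anextS _ avu)].
- by rewrite -(has_succ_iter_anext n buv).
- by rewrite (has_succ_iter_anext n bvu).
Qed.

(* An infinite forward ray spreads to every node; then [anext] is a
   permutation of [V], so every node has both an [a]-successor and an
   [a]-predecessor, against [a_has_end]. *)
Lemma no_a_ray u : ~ a_ray u.
Proof.
move=> ray_u; have succ_all v : has_succ a v.
  exact: (connect_preserved a_ray_adj (connected u v) ray_u 0).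
case: a_has_end => [[v] | [v]]; first by rewrite succ_all.
have anext_inj : injective anext.
  by move=> w z eq_wz; apply: (a_injective (a_anext (succ_all w))); rewrite eq_wz a_anext.
have [anext_inv _ anext_invK] := injF_bij anext_inj.
by move/existsPn/(_ (anext_inv v)); rewrite -{2}(anext_invK v) a_anext.
Qed.

Lemma a_ray_ends u : exists n, ~~ has_succ a (iter n anext u).
Proof.
have [n no_succ] := not_all_ex_not _ _ (@no_a_ray u).
by exists n; apply/negP.
Qed.

Definition a_dist u := ex_minn (a_ray_ends u).

Definition a_end u := iter (a_dist u) anext u.

Lemma a_dist_eq0 u : (a_dist u == 0) = ~~ has_succ a u.
Proof.
rewrite /a_dist; case: ex_minnP => m no_succ m_min; apply/eqP/idP.
  by move=> m0; rewrite m0 in no_succ.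
by move=> no_succ_u; apply/eqP; rewrite -leqn0 m_min.
Qed.

Lemma a_dist_succ u v : a u v -> a_dist u = (a_dist v).+1.
Proof.
move=> auv; rewrite /a_dist; case: ex_minnP => [[|m]] no_succ_u min_u.
  by have /negP[] := no_succ_u; apply/existsP; exists v.
case: ex_minnP => k no_succ_v min_v; congr _.+1; apply/eqP; rewrite eqn_leq.
rewrite (iter_anextS _ auv) in no_succ_u.
by rewrite -ltnS min_u ?min_v // (iter_anextS _ auv).
Qed.

Lemma a_dist_transverse u v : b u v -> a_dist u = a_dist v.
Proof. by move=> buv; apply: eq_ex_minn => n; rewrite (has_succ_iter_anext n buv). Qed.

Lemma coordinate_along_exists : exists c e, coordinate_along c e.
Proof.
exists a_dist, a_end; split.
- exact: a_dist_eq0.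
- exact: a_dist_succ.
- exact: a_dist_transverse.
- by move=> u v auv; rewrite /a_end (a_dist_succ auv) (iter_anextS _ auv).
- by move=> u v buv; rewrite /a_end (a_dist_transverse buv); apply: b_iter_anext.
- by move=> u no_succ; rewrite /a_end; move: no_succ; rewrite -a_dist_eq0 => /eqP ->.
Qed.

End Coordinate.

Section Grid.
Variables (V : finType) (adj l d : rel V) (x y : V -> nat) (xend yend : V -> V).
Hypothesis connected : forall u v, connect adj u v.
Hypothesis adj_ld : forall u v, adj u v -> [\/ l u v, l v u, d u v | d v u].
Hypothesis l_adj : subrel l adj.
Hypothesis d_adj : subrel d adj.
Hypothesis l_injective : forall u v w, l u w -> l v w -> u = v.
Hypothesis d_injective : forall u v w, d u w -> d v w -> u = v.
Hypothesis x_coord : coordinate_along l d x xend.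
Hypothesis y_coord : coordinate_along d l y yend.

Lemma l_coords u v : l u v -> x u = (x v).+1 /\ y u = y v.
Proof. by move=> luv; rewrite (coord_succ x_coord luv) (coord_transverse y_coord luv). Qed.

Lemma d_coords u v : d u v -> x u = x v /\ y u = (y v).+1.
Proof. by move=> duv; rewrite (coord_transverse x_coord duv) (coord_succ y_coord duv). Qed.

Let corner u := yend (xend u).

Lemma corner_adj u v : adj u v -> corner u = corner v.
Proof.
rewrite /corner => /adj_ld [luv | lvu | duv | dvu].
- by rewrite (end_succ x_coord luv).
- by rewrite (end_succ x_coord lvu).
- exact/(end_succ y_coord)/(end_transverse x_coord).
- exact/esym/(end_succ y_coord)/(end_transverse x_coord).
Qed.

Lemma corner_const u v : corner u = corner v.
Proof.
apply: (connect_preserved (P := fun w => corner u = corner w) _ (connected u v)) => //.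
by move=> w z /corner_adj ->.
Qed.

Lemma corner_id u : x u = 0 -> y u = 0 -> corner u = u.
Proof.
move=> /eqP x0 /eqP y0; rewrite (coord_eq0 x_coord) in x0.
by rewrite (coord_eq0 y_coord) in y0; rewrite /corner (end_id x_coord x0) (end_id y_coord y0).
Qed.

(* All nodes share the corner, which is the unique node at the origin; away
   from the origin, step left (or down) from both nodes and use injectivity. *)
Lemma eq_coords u v : x u = x v -> y u = y v -> u = v.
Proof.
have [n] := ubnP (x u + y u); elim: n u v => [//|n IHn] u v size_u xuv yuv.
have [x0 | xpos] := posnP (x u); last first.
  have [u' lu'] := coord_gt0_succ x_coord xpos; rewrite xuv in xpos.
  have [v' lv'] := coord_gt0_succ x_coord xpos.
  have [[xu' yu'] [xv' yv']] := (l_coords lu', l_coords lv').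
  have size_u' : x u' + y u' < n by rewrite -ltnS -addSn -yu' -xu'.
  have eq_u'v' : u' = v'.
    by apply: (IHn _ _ size_u'); [apply: succn_inj; rewrite -xu' -xv' | rewrite -yu' -yv'].
  by apply: l_injective lu' _; rewrite eq_u'v'.
have [y0 | ypos] := posnP (y u); last first.
  have [u' du'] := coord_gt0_succ y_coord ypos; rewrite yuv in ypos.
  have [v' dv'] := coord_gt0_succ y_coord ypos.
  have [[xu' yu'] [xv' yv']] := (d_coords du', d_coords dv').
  have size_u' : x u' + y u' < n by rewrite -ltnS -addnS -yu' -xu'.
  have eq_u'v' : u' = v'.
    by apply: (IHn _ _ size_u'); [rewrite -xu' -xv' | apply: succn_inj; rewrite -yu' -yv'].
  by apply: d_injective du' _; rewrite eq_u'v'.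
have corner_v : corner v = v by apply: corner_id; rewrite -?xuv -?yuv.
by rewrite -(corner_id x0 y0) -corner_v; apply: corner_const.
Qed.

Lemma grid_of_coordinates : grid_structure adj.
Proof.
exists (\max_u y u).+1, (\max_u x u).+1, x, y; split.
- exact: eq_coords.
- by move=> u; rewrite !ltnS !leq_bigmax.
move=> u v xvu yvu; split.
  case/adj_ld=> [/l_coords [-> ->] | /l_coords [xv _] | /d_coords [-> ->] | /d_coords [_ yv]].
  - by left.
  - by move: xvu; rewrite xv ltnn.
  - by right.
  - by move: yvu; rewrite yv ltnn.
case=> [[xuv yuv] | [xuv yuv]].
- have [w luw] : exists w, l u w by apply: (coord_gt0_succ x_coord); rewrite xuv.
  have [xw yw] := l_coords luw.
  by rewrite -(@eq_coords w v) ?l_adj //; [apply: succn_inj; rewrite -xw | rewrite -yw].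
- have [w duw] : exists w, d u w by apply: (coord_gt0_succ y_coord); rewrite yuv.
  have [xw yw] := d_coords duw.
  by rewrite -(@eq_coords w v) ?d_adj //; [rewrite -xw | apply: succn_inj; rewrite -yw].
Qed.

End Grid.

Section Labels.
Variables (V : finType) (adj : rel V) (lab : V -> V -> label).
Hypotheses (adj_sym : symmetric adj) (valid : valid_labeling adj lab).

Definition lrel (l : label) : rel V := fun u v => adj u v && (lab u v == l).

Lemma lrelP l u v : reflect (step adj lab l u v) (lrel l u v).
Proof. by apply: (iffP andP) => -[? /eqP ?]; split. Qed.

Lemma has_labelP u l : reflect (has_label adj lab u l) (has_succ (lrel l) u).
Proof. by apply: (iffP existsP) => -[v /lrelP]; exists v. Qed.

Lemma lrel_adj l : subrel (lrel l) adj.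
Proof. by move=> u v /andP []. Qed.

Lemma lrel_functional l u v w : lrel l u v -> lrel l u w -> v = w.
Proof.
case: valid => uniq_lab _ /andP [auv /eqP luv] /andP [auw /eqP luw].
by case: (eqVneq v w) => // /(uniq_lab u v w auv auw); rewrite luv luw.
Qed.

Lemma lrelLR u v : lrel lL u v = lrel lR v u.
Proof.
case: valid => _ [LR _]; rewrite /lrel (adj_sym v u).
by case: (boolP (adj u v)) => //= /LR [? ?]; apply/eqP/eqP.
Qed.

Lemma lrelDU u v : lrel lD u v = lrel lU v u.
Proof.
case: valid => _ [_ [UD _]]; rewrite /lrel adj_sym.
by case: (boolP (adj v u)) => //= /UD [? ?]; apply/eqP/eqP.
Qed.

Section Converse.
Variables (l l' : label).
Hypothesis lrel_converse : forall u v, lrel l u v = lrel l' v u.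

Lemma lrel_injective u v w : lrel l u w -> lrel l v w -> u = v.
Proof. by rewrite !lrel_converse; apply: lrel_functional. Qed.

Lemma lrel_has_end :
    (exists u, ~ has_label adj lab u l) \/ (exists u, ~ has_label adj lab u l') ->
  (exists u, ~~ has_succ (lrel l) u) \/ (exists v, ~~ [exists u, lrel l u v]).
Proof.
case=> -[u no_label]; [left | right]; exists u; apply/negP.
  by move/has_labelP.
by case/existsP=> v; rewrite lrel_converse => lvu; apply/no_label/has_labelP/existsP; exists v.
Qed.

End Converse.

Lemma lrelL_injective u v w : lrel lL u w -> lrel lL v w -> u = v.
Proof. by apply: (lrel_injective lrelLR). Qed.

Lemma lrelD_injective u v w : lrel lD u w -> lrel lD v w -> u = v.
Proof. by apply: (lrel_injective lrelDU). Qed.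

Lemma f_eq_lrel l u v : lrel l u v -> f_eq adj lab u [:: l] v.
Proof.
move=> luv; exists [:: v]; split=> [|//|[|w [|? ?]] //=]; first by split=> //; apply/lrelP.
- by case=> /lrelP luw _; rewrite (lrel_functional luv luw).
- by case.
Qed.

Lemma lrelD_has_succL u v : lrel lD u v -> has_succ (lrel lL) u = has_succ (lrel lL) v.
Proof.
case: valid => _ [_ [_ [_ [_ vert]]]]; rewrite lrelDU => /f_eq_lrel /vert [hasL _].
by apply/has_labelP/has_labelP => /hasL.
Qed.

Lemma lrelL_has_succD u v : lrel lL u v -> has_succ (lrel lD) u = has_succ (lrel lD) v.
Proof.
case: valid => _ [_ [_ [_ [horiz _]]]]; rewrite lrelLR => /f_eq_lrel /horiz [hasD _].
by apply/has_labelP/has_labelP => /hasD.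
Qed.

Lemma adj_lrelLD u v : adj u v -> [\/ lrel lL u v, lrel lL v u, lrel lD u v | lrel lD v u].
Proof.
move=> auv; case luv: (lab u v).
- by apply: Or44; rewrite lrelDU /lrel auv luv.
- by apply: Or43; rewrite /lrel auv luv.
- by apply: Or41; rewrite /lrel auv luv.
- by apply: Or42; rewrite lrelLR /lrel auv luv.
Qed.

(* Constraint (d) closes the square: the loop R, U, L, D from [z] passes
   through [w], [u], [v] in turn and returns to [z]. *)
Lemma lrelLD_square u v w : lrel lL u v -> lrel lD u w -> exists2 z, lrel lL w z & lrel lD v z.
Proof.
case: valid => _ [_ [_ [loop [horiz _]]]] luv duw.
have wUu : lrel lU w u by rewrite -lrelDU.
have /existsP [z lwz] : has_succ (lrel lL) w.
  by rewrite -(lrelD_has_succL duw); apply/existsP; exists v.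
exists z => //.
have zRw : lrel lR z w by rewrite -lrelLR.
have zR : has_label adj lab z lR by apply/has_labelP/existsP; exists w.
have zU : has_label adj lab z lU.
  by have [_ ->] := horiz _ _ (f_eq_lrel zRw); apply/has_labelP/existsP; exists u.
have [p [path_z last_z _]] := loop z zR zU.
case: p path_z last_z => [|p1 [|p2 [|p3 [|p4 [|? ?]]]]] /=; try tauto.
move=> [/lrelP zp1 [/lrelP p12 [/lrelP p23 [/lrelP p34 _]]]] <-.
rewrite -(lrel_functional zRw zp1) in p12; rewrite -(lrel_functional wUu p12) in p23.
by rewrite -(lrel_functional luv p23) in p34.
Qed.

Lemma lrelDL_square u v w : lrel lD u v -> lrel lL u w -> exists2 z, lrel lD w z & lrel lL v z.
Proof. by move=> duv luw; have [z lvz dwz] := lrelLD_square luw duv; exists z. Qed.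

Lemma adj_lrelDL u v : adj u v -> [\/ lrel lD u v, lrel lD v u, lrel lL u v | lrel lL v u].
Proof. by case/adj_lrelLD; [apply: Or43 | apply: Or44 | apply: Or41 | apply: Or42]. Qed.

Hypothesis connected : forall u v, connect adj u v.

Lemma lrelL_coordinate :
    (exists u, ~ has_label adj lab u lL) \/ (exists u, ~ has_label adj lab u lR) ->
  exists x xend, coordinate_along (lrel lL) (lrel lD) x xend.
Proof.
move=> no_L; apply: (coordinate_along_exists _ _ lrelLD_square lrelD_has_succL connected).
- exact: lrel_functional.
- exact: lrelL_injective.
- exact: adj_lrelLD.
- exact: lrel_has_end lrelLR no_L.
Qed.

Lemma lrelD_coordinate :
    (exists u, ~ has_label adj lab u lD) \/ (exists u, ~ has_label adj lab u lU) ->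
  exists y yend, coordinate_along (lrel lD) (lrel lL) y yend.
Proof.
move=> no_D; apply: (coordinate_along_exists _ _ lrelDL_square lrelL_has_succD connected).
- exact: lrel_functional.
- exact: lrelD_injective.
- exact: adj_lrelDL.
- exact: lrel_has_end lrelDU no_D.
Qed.

End Labels.

Theorem lemma6p5 (V : finType) (adj : rel V) (lab : V -> V -> label) :
  symmetric adj -> irreflexive adj ->
  (forall u v : V, connect adj u v) ->
  valid_labeling adj lab ->
  ((exists u, ~ has_label adj lab u lD) \/ (exists u, ~ has_label adj lab u lU)) ->
  ((exists u, ~ has_label adj lab u lL) \/ (exists u, ~ has_label adj lab u lR)) ->
  grid_structure adj.
Proof.
move=> adj_sym _ connected valid no_D no_L.
have [x [xend x_coord]] := lrelL_coordinate adj_sym valid connected no_L.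
have [y [yend y_coord]] := lrelD_coordinate adj_sym valid connected no_D.
apply: (grid_of_coordinates connected (adj_lrelLD adj_sym valid)) x_coord y_coord.
- exact: lrel_adj.
- exact: lrel_adj.
- exact: lrelL_injective.
- exact: lrelD_injective.
Qed.
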